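(* Let $P=\langle p_1,\dots,p_n\rangle$ be a set of points in convex position with positive weights $w_1,\dots,w_n$. For any canonical triple $(i,j,k)$, including the case $k=0$, $$f(i,j,k)=\begin{cases}\max_{p_l\in P_k(i,j)}\bigl(f(i,l,j)+f(l,j,i)+w_l\bigr), & \text{if } P_k(i,j)\neq\emptyset,\\ 0, & \text{otherwise.}\end{cases}$$
   Context: $P$ is in convex position (every point is a hull vertex), no three points collinear, no four cocircular, listed counterclockwise along the hull as the cyclic list $\langle p_1,\dots,p_n\rangle$; $P(i,j)$ denotes the points strictly between $p_i$ and $p_j$ when moving counterclockwise from $p_i$ to $p_j$. An independent set is a subset of $P$ whose pairwise Euclidean distances all exceed $1$. For three points $p,q,s$, $D(p,q,s)$ is the disk whose boundary circle passes through $p,q,s$. A canonical triple $(i,j,k)$ with $k\ne 0$ consists of indices such that $p_i,p_j,p_k$ are in counterclockwise order in $P$ and have pairwise distances greater than $1$; also $(i,j,0)$ is a canonical triple whenever $|p_ip_j|>1$, where $p_0$ is a dummy point and $D(p_i,p_j,p_0)$ is taken to be the halfplane to the left of the directed segment from $p_i$ to $p_j$. For a canonical triple, $P_k(i,j)=\{p\in P(i,j): p\notin D(p_i,p_j,p_k),\ |pp_i|>1,\ |pp_j|>1\}$, and $f(i,j,k)$ is the maximum total weight of a subset $P'\subseteq P(i,j)$ lying outside $D(p_i,p_j,p_k)$ such that $P'\cup\{p_i,p_j\}$ is an independent set (and $0$ if there is no nonempty such subset). *)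

From HB Require Import structures.
From mathcomp Require Import all_boot all_order all_algebra.
From mathcomp Require Import boolp.
Set Implicit Arguments. Unset Strict Implicit. Unset Printing Implicit Defensive.
Import Order.TTheory GRing.Theory Num.Theory.
Local Open Scope ring_scope.

Section Geometry.
Variable R : rcfType.
Definition pt := (R * R)%type.

Definition dist (a b : pt) : R :=
  Num.sqrt ((a.1 - b.1) ^+ 2 + (a.2 - b.2) ^+ 2).

(* orientation determinant: > 0 iff c lies strictly left of directed a->b *)
Definition orient (a b c : pt) : R :=
  (b.1 - a.1) * (c.2 - a.2) - (b.2 - a.2) * (c.1 - a.1).

Definition in_disk (a b s x : pt) : Prop :=
  exists c : pt, dist c a = dist c b /\ dist c b = dist c s /\ dist c x <= dist c a.

Definition cocircular (a b s t : pt) : Prop :=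
  exists c : pt, dist c a = dist c b /\ dist c b = dist c s /\ dist c s = dist c t.
End Geometry.

(* Points are indexed by 'I_n.+1 : indices 1..n are the points p_1..p_n of the
   cyclic list <p_1,...,p_n>; index 0 is the dummy point p_0 (its coordinates
   are never used). *)
Section Problem.
Variables (R : rcfType) (n : nat) (p : 'I_n.+1 -> pt R) (w : 'I_n.+1 -> R).

(* p_1..p_n are in convex position, no three collinear, listed counterclockwise
   along the hull: every index-ordered triple is strictly counterclockwise. *)
Definition convex_ccw : Prop :=
  forall a b c : 'I_n.+1, (0 < a)%N -> (a < b)%N -> (b < c)%N ->
    0 < orient (p a) (p b) (p c).

Definition no_four_cocircular : Prop :=
  forall a b c d : 'I_n.+1, (0 < a)%N -> (0 < b)%N -> (0 < c)%N -> (0 < d)%N ->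
    uniq [:: a; b; c; d] -> ~ cocircular (p a) (p b) (p c) (p d).

(* l \in P(i,j): p_l strictly between p_i and p_j counterclockwise *)
Definition between (i j l : 'I_n.+1) : bool :=
  (0 < l)%N && (if (i < j)%N then (i < l < j)%N else (i < l)%N || (l < j)%N).

(* membership in D(p_i,p_j,p_k); for k = 0, the halfplane left of p_i -> p_j *)
Definition in_D (i j k : 'I_n.+1) (x : pt R) : Prop :=
  if (k == 0 :> nat) then (0 < orient (p i) (p j) x : Prop)
  else in_disk (p i) (p j) (p k) x.

Definition far (a b : 'I_n.+1) : bool := 1 < dist (p a) (p b).

Definition canonical_triple (i j k : 'I_n.+1) : bool :=
  if (k == 0 :> nat) then [&& (0 < i)%N, (0 < j)%N & far i j]
  else [&& (0 < i)%N, between i k j, far i j, far j k & far i k].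

Definition independent (S : {set 'I_n.+1}) : bool :=
  [forall a in S, forall b in S, (a != b) ==> far a b].

Definition feasible (i j k : 'I_n.+1) (S : {set 'I_n.+1}) : bool :=
  [forall l in S, between i j l && ~~ `[< in_D i j k (p l) >]]
  && independent (i |: (j |: S)).

Definition f (i j k : 'I_n.+1) : R :=
  \big[Num.max/0]_(S : {set 'I_n.+1} | feasible i j k S) \sum_(l in S) w l.

Definition Pk (i j k : 'I_n.+1) : {set 'I_n.+1} :=
  [set l | [&& between i j l, ~~ `[< in_D i j k (p l) >], far l i & far l j]].
End Problem.

(* Both inequalities split a feasible set at one point.  Given a feasible set S
   for (i,j,k), let p_l be the point of S seeing p_i p_j under the widest angle:
   every other point of S lies outside D(p_i,p_l,p_j), so the rest of S splits
   into feasible sets for (i,l,j) and (l,j,i).  Conversely, for p_l in P_k(i,j),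
   optimal sets for (i,l,j) and (l,j,i) together with p_l are feasible for
   (i,j,k): a point of P(i,j) outside D(p_i,p_l,p_j) stays outside
   D(p_i,p_j,p_k), and distances across the two halves exceed 1 because a
   diagonal of a convex quadrilateral whose fourth vertex lies inside the circle
   through the other three is at least as long as one of its adjacent sides.
   All these facts are sign conditions on orientation and in-circle
   determinants. *)

From HB Require Import structures.
From mathcomp Require Import all_boot all_order all_algebra.
From mathcomp Require Import boolp.
From mathcomp Require Import ring lra zify.
Set Implicit Arguments. Unset Strict Implicit. Unset Printing Implicit Defensive.
Import Order.TTheory GRing.Theory Num.Theory.
Local Open Scope ring_scope.

Section Circles.
Variable R : rcfType.
Implicit Types a b c d x z : pt R.

Definition sqdist a b : R := (a.1 - b.1) ^+ 2 + (a.2 - b.2) ^+ 2.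

(* [(a - b) . (c - b)]: its sign is that of the cosine of the angle at [b]. *)
Definition dotp a b c : R :=
  (a.1 - b.1) * (c.1 - b.1) + (a.2 - b.2) * (c.2 - b.2).

Definition incircle a b c x : R :=
  let u1 := a.1 - x.1 in let u2 := a.2 - x.2 in let u3 := u1 ^+ 2 + u2 ^+ 2 in
  let v1 := b.1 - x.1 in let v2 := b.2 - x.2 in let v3 := v1 ^+ 2 + v2 ^+ 2 in
  let t1 := c.1 - x.1 in let t2 := c.2 - x.2 in let t3 := t1 ^+ 2 + t2 ^+ 2 in
  u1 * (v2 * t3 - v3 * t2) - u2 * (v1 * t3 - v3 * t1) + u3 * (v1 * t2 - v2 * t1).

Lemma sqdist_ge0 a b : 0 <= sqdist a b.
Proof. by rewrite addr_ge0 ?sqr_ge0. Qed.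

Lemma sqdistC a b : sqdist a b = sqdist b a.
Proof. rewrite /sqdist; ring. Qed.

Lemma lt1_dist a b : (1 < dist a b) = (1 < sqdist a b).
Proof.
rewrite /dist -/(sqdist a b); have [s_gt0|s_le0] := ltrP 0 (sqdist a b).
  by rewrite -{1}sqrtr1 ltr_sqrt.
by rewrite ler0_sqrtr // ltr10 ltNge (le_trans s_le0) ?ler01.
Qed.

Lemma eq_dist a b c d : (dist a b = dist c d) <-> (sqdist a b = sqdist c d).
Proof.
split=> [h|h]; last by rewrite /dist -!/(sqdist _ _) h.
by apply/eqP; rewrite -eqr_sqrt ?sqdist_ge0 //; apply/eqP.
Qed.

Lemma ler_dist a b c d : (dist a b <= dist c d) = (sqdist a b <= sqdist c d).
Proof. exact: ler_sqrt (sqdist_ge0 _ _). Qed.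

Lemma orient_rot a b c : orient b c a = orient a b c.
Proof. rewrite /orient; ring. Qed.

Lemma orient_swap a b c : orient a c b = - orient a b c.
Proof. rewrite /orient; ring. Qed.

Lemma incircle_circumcenter a b c x z :
  sqdist z a = sqdist z b -> sqdist z b = sqdist z c ->
  incircle a b c x = orient a b c * (sqdist z a - sqdist z x).
Proof.
move=> zab zbc; apply/eqP; rewrite -subr_eq0; apply/eqP.
transitivity (- ((a.1 - x.1) * (c.2 - x.2) - (a.2 - x.2) * (c.1 - x.1))
                * (sqdist z b - sqdist z a)
              + ((a.1 - x.1) * (b.2 - x.2) - (a.2 - x.2) * (b.1 - x.1))
                * (sqdist z c - sqdist z a)).
  by rewrite /incircle /orient /sqdist /=; ring.
by rewrite -zbc -zab !subrr !mulr0 addr0.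
Qed.

Lemma exists_circumcenter a b c : orient a b c != 0 ->
  exists z, sqdist z a = sqdist z b /\ sqdist z b = sqdist z c.
Proof.
move=> abc; have D0 : 2 * orient a b c != 0 by rewrite mulf_neq0 ?pnatr_eq0.
set na := a.1 ^+ 2 + a.2 ^+ 2; set nb := b.1 ^+ 2 + b.2 ^+ 2.
set nc := c.1 ^+ 2 + c.2 ^+ 2.
exists ((na * (b.2 - c.2) + nb * (c.2 - a.2) + nc * (a.2 - b.2)) / (2 * orient a b c),
        (na * (c.1 - b.1) + nb * (a.1 - c.1) + nc * (b.1 - a.1)) / (2 * orient a b c)).
move: D0; rewrite /sqdist /orient /na /nb /nc /= => D0.
by split; field.
Qed.

Lemma in_diskE a b c x : 0 < orient a b c ->
  in_disk a b c x <-> 0 <= incircle a b c x.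
Proof.
move=> abc; split.
  case=> z [/eq_dist zab [/eq_dist zbc]]; rewrite ler_dist => zx.
  by rewrite (incircle_circumcenter x zab zbc) pmulr_rge0 // subr_ge0.
have [z [zab zbc]] := exists_circumcenter (lt0r_neq0 abc).
rewrite (incircle_circumcenter x zab zbc) pmulr_rge0 // subr_ge0 => zx.
by exists z; rewrite !eq_dist ler_dist.
Qed.

Lemma incircle_eq0_cocircular a b c x : orient a b c != 0 ->
  incircle a b c x = 0 -> cocircular a b c x.
Proof.
move=> abc; have [z [zab zbc]] := exists_circumcenter abc.
rewrite (incircle_circumcenter x zab zbc) => /eqP.
rewrite mulf_eq0 (negbTE abc) subr_eq0 => /eqP zx.
by exists z; rewrite !eq_dist -zbc -zab.
Qed.

Lemma incircle_pluecker a b c d e :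
  orient a b d * incircle a b c e =
  orient a b e * incircle a b c d + orient a b c * incircle a b d e.
Proof. rewrite /orient /incircle /=; ring. Qed.

Lemma incircle_dotp a b c x :
  incircle a b c x = orient a b x * dotp a c b - orient a b c * dotp a x b.
Proof. rewrite /orient /incircle /dotp /=; ring. Qed.

(* If [d] is inside the circle [abc], the angles at [b] and [d] of the convex
   quadrilateral [abcd] add up to more than [pi]; one of them is obtuse, so the
   diagonal [ac] is the longest side of the triangle containing that angle. *)
Lemma quadrilateral_diagonal a b c d :
  0 < orient a b c -> 0 < orient a c d -> 0 < incircle a b c d ->
  Order.min (sqdist a b) (sqdist a d) <= sqdist a c.
Proof.
move=> abc acd abcd.
have eb : sqdist a c = sqdist a b + sqdist c b - 2 * dotp a b c.
  by rewrite /sqdist /dotp; ring.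
have ed : sqdist a c = sqdist a d + sqdist c d - 2 * dotp a d c.
  by rewrite /sqdist /dotp; ring.
have [hb|hb] := leP (dotp a b c) 0.
  by rewrite ge_min eb; have := sqdist_ge0 c b; lra.
have [hd|hd] := leP (dotp a d c) 0.
  by rewrite ge_min ed; have := sqdist_ge0 c d; lra.
have : incircle a b c d = - (orient a b c * dotp a d c + orient a c d * dotp a b c).
  by rewrite /incircle /orient /dotp /=; ring.
have := mulr_gt0 abc hd; have := mulr_gt0 acd hb; lra.
Qed.

Lemma in_disk_rot a b c x : in_disk a b c x <-> in_disk b c a x.
Proof.
by split; case=> z [zab [zbc zx]]; exists z; rewrite -zbc -zab.
Qed.

End Circles.

Section ConvexPosition.
Variables (R : rcfType) (n : nat) (p : 'I_n.+1 -> pt R) (w : 'I_n.+1 -> R).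
Hypothesis p_convex : convex_ccw p.
Hypothesis p_not_cocircular : no_four_cocircular p.
Hypothesis w_gt0 : forall l : 'I_n.+1, (0 < l)%N -> 0 < w l.
Implicit Types (a b c d i j k l x y z : 'I_n.+1) (S T : {set 'I_n.+1}).
Local Notation o a b c := (orient (p a) (p b) (p c)).
Local Notation icp a b c d := (incircle (p a) (p b) (p c) (p d)).

Lemma betweenE i j l :
  between i j l =
  (0 < l)%N && ((i < l < j)%N || (j <= i)%N && ((i < l)%N || (l < j)%N)).
Proof. by rewrite /between; case: (ltnP i j) => ij; apply/idP/idP; lia. Qed.

Lemma between_gt0 i j l : between i j l -> (0 < l)%N.
Proof. by rewrite betweenE => /andP[]. Qed.

Lemma between_neq_l i j l : between i j l -> l != i.
Proof. rewrite betweenE -val_eqE /=; lia. Qed.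

Lemma between_neq_r i j l : between i j l -> l != j.
Proof. rewrite betweenE -val_eqE /=; lia. Qed.

Lemma between_trans_l i j l x : between i j l -> between i l x -> between i j x.
Proof. rewrite !betweenE; lia. Qed.

Lemma between_trans_r i j l x : between i j l -> between l j x -> between i j x.
Proof. rewrite !betweenE; lia. Qed.

Lemma between_splitE i j l x : between i j l -> between i j x -> x != l ->
  between l j x = ~~ between i l x.
Proof. rewrite !betweenE -val_eqE /= => il ix xl; apply/idP/idP; lia. Qed.

Lemma between_disjoint i j l x : between i j l -> between i l x -> ~~ between l j x.
Proof. rewrite !betweenE; lia. Qed.

Lemma orient_cyclic a b c : (0 < a)%N -> (0 < b)%N -> (0 < c)%N ->
  [|| (a < b < c)%N, (b < c < a)%N | (c < a < b)%N] -> 0 < o a b c.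
Proof.
move=> a0 b0 c0 /or3P[/andP[ab bc]|/andP[bc ca]|/andP[ca ab]].
- exact: p_convex.
- by rewrite -orient_rot; apply: p_convex.
- by rewrite orient_rot; apply: p_convex.
Qed.

Ltac cyclic_order :=
  apply: orient_cyclic;
  repeat match goal with h : is_true (between _ _ _) |- _ => rewrite betweenE in h end;
  lia.

Lemma orient_between i j l : (0 < i)%N -> (0 < j)%N -> (i : nat) != j ->
  between i j l -> 0 < o i l j.
Proof. by move=> *; cyclic_order. Qed.

Lemma farE a b : far p a b = (1 < sqdist (p a) (p b)).
Proof. exact: lt1_dist. Qed.

Lemma farC a b : far p a b = far p b a.
Proof. by rewrite !farE sqdistC. Qed.

Lemma far_neq a b : far p a b -> (a : nat) != b.
Proof.
by apply: contraTN => /eqP/val_inj->; rewrite farE /sqdist !subrr expr0n addr0 ltr10.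
Qed.

Lemma far_diagonal a b c d : 0 < o a b c -> 0 < o a c d -> 0 < icp a b c d ->
  far p a b -> far p a d -> far p a c.
Proof.
rewrite !farE => abc acd abcd ab ad.
by apply: lt_le_trans (quadrilateral_diagonal abc acd abcd); rewrite lt_min ab.
Qed.

Lemma independentP S :
  reflect {in S &, forall a b, a != b -> far p a b} (independent p S).
Proof.
apply: (iffP forall_inP) => [indS a b aS bS ab | farS a aS].
  by move/forall_inP/(_ b bS)/implyP: (indS a aS); apply.
by apply/forall_inP => b bS; apply/implyP; apply: farS.
Qed.

Lemma independent_subset S T : S \subset T -> independent p T -> independent p S.
Proof.
move=> /subsetP ST /independentP indT; apply/independentP => a b aS bS.
by apply: indT; apply: ST.
Qed.

Lemma independentU S T : independent p S -> independent p T ->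
  (forall a b, a \in S -> b \in T -> a != b -> far p a b) -> independent p (S :|: T).
Proof.
move=> /independentP indS /independentP indT farST; apply/independentP => a b.
rewrite !inE => /orP[aS|aT] /orP[bS|bT] ab; try by [apply: indS | apply: indT].
  exact: farST.
by rewrite farC; apply: farST; rewrite // eq_sym.
Qed.

Lemma in_D_disk i j k v : (0 < k)%N -> in_D p i j k v <-> in_disk (p i) (p j) (p k) v.
Proof. by move=> k0; rewrite /in_D ifF // -[_ == _]negbK -lt0n k0. Qed.

Lemma in_D_halfplane i j k v : (k : nat) = 0%N ->
  in_D p i j k v <-> 0 < orient (p i) (p j) v.
Proof. by move=> k0; rewrite /in_D k0 eqxx. Qed.

Lemma feasibleP i j k S : feasible p i j k S <->
  {in S, forall l, between i j l /\ ~ in_D p i j k (p l)} /\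
  independent p (i |: (j |: S)).
Proof.
split=> [/andP[/forall_inP inS indS] | [inS indS]].
  by split=> // l /inS /andP[-> /asboolPn].
by rewrite /feasible indS andbT; apply/forall_inP => l /inS[-> /asboolPn].
Qed.

Lemma PkP i j k l : reflect
  [/\ between i j l, ~ in_D p i j k (p l), far p l i & far p l j] (l \in Pk p i j k).
Proof.
rewrite inE; apply: (iffP and4P) => -[-> /asboolPn ? -> ->];
  by split=> //; apply/asboolPn.
Qed.

Lemma feasible_subset_Pk i j k S : feasible p i j k S -> S \subset Pk p i j k.
Proof.
case/feasibleP => inS /independentP indS; apply/subsetP => l lS.
have [ijl lD] := inS l lS; apply/PkP; split => //; apply: indS;
  by rewrite ?inE ?lS ?eqxx ?orbT ?(between_neq_l ijl) ?(between_neq_r ijl).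
Qed.

Lemma feasible0 i j k : far p i j -> feasible p i j k set0.
Proof.
move=> ij; apply/feasibleP; split=> [l|]; first by rewrite inE.
apply/independentP => a b; rewrite setU0 !inE.
by case/orP=> /eqP-> /orP[]/eqP->; rewrite ?eqxx // farC.
Qed.

Lemma sum_feasible_ge0 i j k S : feasible p i j k S -> 0 <= \sum_(l in S) w l.
Proof.
by case/feasibleP => inS _; apply: sumr_ge0 => l /inS[/between_gt0/w_gt0/ltW].
Qed.

Lemma le_f i j k S : feasible p i j k S -> \sum_(l in S) w l <= f p w i j k.
Proof. exact: le_bigmax_cond. Qed.

Lemma f_le i j k v : 0 <= v ->
  (forall S, feasible p i j k S -> \sum_(l in S) w l <= v) -> f p w i j k <= v.
Proof. exact: bigmax_le. Qed.

Lemma f_ge0 i j k : far p i j -> 0 <= f p w i j k.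
Proof. by move=> ij; have := le_f (feasible0 k ij); rewrite big_set0. Qed.

Lemma f_attained i j k : far p i j ->
  exists2 S, feasible p i j k S & f p w i j k = \sum_(l in S) w l.
Proof.
move=> ij; rewrite /f.
have [S FS ->] := eq_bigmax set0 _ (fun S => \sum_(l in S) w l)
  (feasible0 k ij) (@sum_feasible_ge0 i j k).
by exists S.
Qed.

Lemma feasible_between i j k S : feasible p i j k S -> {in S, forall z, between i j z}.
Proof. by move=> /feasible_subset_Pk/subsetP SPk z /SPk/PkP[]. Qed.

Lemma outside_left_incircle i j l x : (0 < i)%N -> (0 < j)%N -> (i : nat) != j ->
  between i j l -> ~ in_D p i l j (p x) <-> icp i l j x < 0.
Proof.
move=> i0 j0 ij ijl; have ilj := orient_between i0 j0 ij ijl.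
rewrite ltNge; split=> [out | /negP out D].
  by apply/negP => /(in_diskE _ ilj)/(in_D_disk _ _ _ j0).
by apply/out/(in_diskE _ ilj)/(in_D_disk _ _ _ j0).
Qed.

Lemma outside_right_incircle i j l x : (0 < i)%N -> (0 < j)%N -> (i : nat) != j ->
  between i j l -> ~ in_D p l j i (p x) <-> icp i l j x < 0.
Proof.
move=> i0 j0 ij ijl; rewrite -(outside_left_incircle x i0 j0 ij ijl).
split=> outside D; apply: outside.
  by move/(in_D_disk _ _ _ j0)/in_disk_rot/(in_D_disk _ _ _ i0): D.
by move/(in_D_disk _ _ _ i0)/in_disk_rot/in_disk_rot/(in_D_disk _ _ _ j0): D.
Qed.

Lemma far_of_left_part i j l x : (0 < i)%N -> (0 < j)%N -> (i : nat) != j ->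
  between i j l -> between i l x -> icp i l j x < 0 ->
  far p x i -> far p x l -> far p x j.
Proof.
move=> i0 j0 ij ijl ilx out xi xl; apply: far_diagonal xl xi.
1-2: by cyclic_order.
- have -> : icp x l j i = - icp i l j x by rewrite /incircle /=; ring.
  by rewrite oppr_gt0.
Qed.

Lemma far_of_right_part i j l y : (0 < i)%N -> (0 < j)%N -> (i : nat) != j ->
  between i j l -> between l j y -> icp i l j y < 0 ->
  far p y j -> far p y l -> far p y i.
Proof.
move=> i0 j0 ij ijl ljy out yj yl; apply: far_diagonal yj yl.
1-2: by cyclic_order.
- have -> : icp y j i l = - icp i l j y by rewrite /incircle /=; ring.
  by rewrite oppr_gt0.
Qed.

Lemma far_across_parts i j l x y : (0 < i)%N -> (0 < j)%N -> (i : nat) != j ->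
  between i j l -> between i l x -> between l j y ->
  icp i l j x < 0 -> icp i l j y < 0 -> far p x i -> far p x l -> far p x y.
Proof.
move=> i0 j0 ij ijl ilx ljy outx outy xi xl; apply: far_diagonal xl xi.
1-2: by cyclic_order.
(* By the Pluecker relation on the chord [l i], the signs of [icp i l j x] and
   [icp i l j y] force that of [icp l i x y]. *)
have -> : icp x l y i = - icp l i x y by rewrite /incircle /=; ring.
have pl := incircle_pluecker (p l) (p i) (p j) (p x) (p y).
have swap z : icp l i j z = - icp i l j z by rewrite /incircle /=; ring.
rewrite !swap in pl.
have lix : 0 < o l i x by cyclic_order.
have liy : 0 < - o l i y by rewrite -orient_swap; cyclic_order.
have lji : 0 < - o l i j by rewrite -orient_swap; cyclic_order.
have yterm : 0 < o l i x * - icp i l j y by rewrite mulr_gt0 // oppr_gt0.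
have xterm : 0 < - o l i y * - icp i l j x by rewrite mulr_gt0 // oppr_gt0.
rewrite -(pmulr_rgt0 _ lji); lra.
Qed.

Lemma canonical_tripleP i j k : canonical_triple p i j k ->
  [/\ (0 < i)%N, (0 < j)%N, far p i j &
      (k : nat) = 0%N \/ [/\ (0 < k)%N, between i k j & far p i k]].
Proof.
rewrite /canonical_triple; case: eqP => [k0 /and3P[-> -> ->] | /eqP k0].
  by split=> //; left.
case/and5P => -> ikj -> _ ik; split=> //; first exact: between_gt0 ikj.
by right; split=> //; rewrite lt0n.
Qed.

Lemma outside_D_of_outside_inner i j k l z : canonical_triple p i j k ->
  between i j l -> ~ in_D p i j k (p l) ->
  between i j z -> icp i l j z < 0 -> ~ in_D p i j k (p z).
Proof.
case/canonical_tripleP => i0 j0 /far_neq ij [k0 | [k0 ikj /far_neq ik]] ijl lD ijz zout.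
  have izj : 0 < - o i j z by rewrite -orient_swap; cyclic_order.
  by move/(in_D_halfplane _ _ _ k0); lra.
have ijk : 0 < o i j k by cyclic_order.
have outside v : ~ in_D p i j k v <-> incircle (p i) (p j) (p k) v < 0.
  by rewrite (in_D_disk _ _ _ k0) (in_diskE _ ijk) ltNge; split=> /negP.
move/outside: lD => lout; apply/outside.
have pl := incircle_pluecker (p i) (p j) (p k) (p l) (p z).
have swap : icp i j l z = - icp i l j z by rewrite /incircle /=; ring.
rewrite swap in pl.
have ijl' : 0 < - o i j l by rewrite -orient_swap; cyclic_order.
have izj : 0 < - o i j z by rewrite -orient_swap; cyclic_order.
have lterm : 0 < - o i j z * - icp i j k l by rewrite mulr_gt0 // oppr_gt0.
have zterm : 0 < o i j k * - icp i l j z by rewrite mulr_gt0 // oppr_gt0.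
rewrite -oppr_gt0 -(pmulr_rgt0 _ ijl'); lra.
Qed.

(* [key i j z] is minus the cotangent of the angle [p_i p_z p_j]; the point of
   largest key sees [p_i p_j] under the widest angle. *)
Definition key i j z : R := dotp (p i) (p z) (p j) / o i j z.

Lemma incircle_key i j l x : o i j l != 0 -> o i j x != 0 ->
  icp i j l x = o i j x * o i j l * (key i j l - key i j x).
Proof. by move=> ijl ijx; rewrite incircle_dotp /key; field; apply/andP. Qed.

Lemma key_le_incircle_lt0 i j l x : (0 < i)%N -> (0 < j)%N -> (i : nat) != j ->
  between i j l -> between i j x -> x != l -> key i j x <= key i j l ->
  icp i l j x < 0.
Proof.
move=> i0 j0 ij ijl ijx xl keyx.
have ilj : 0 < - o i j l by rewrite -orient_swap; cyclic_order.
have ixj : 0 < - o i j x by rewrite -orient_swap; cyclic_order.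
have -> : icp i l j x = - icp i j l x by rewrite /incircle /=; ring.
have ijl0 : o i j l != 0 by rewrite -oppr_eq0 lt0r_neq0.
have ijx0 : o i j x != 0 by rewrite -oppr_eq0 lt0r_neq0.
have ge0 : 0 <= icp i j l x.
  rewrite incircle_key // -[o i j x * _]mulrNN mulr_ge0 ?subr_ge0 //.
  exact/ltW/mulr_gt0.
have ne0 : icp i j l x != 0.
  apply/eqP => /(incircle_eq0_cocircular ijl0).
  apply: p_not_cocircular; rewrite ?(between_gt0 ijl) ?(between_gt0 ijx) //=.
  by rewrite !inE -!val_eqE /=; move: ijl ijx xl; rewrite !betweenE -val_eqE /=; lia.
by rewrite oppr_lt0 lt0r ne0 ge0.
Qed.

Lemma between_partition i j l S : between i j l -> l \in S ->
  {in S, forall z, between i j z} ->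
  S = l |: ([set z in S | between i l z] :|: [set z in S | between l j z]).
Proof.
move=> ijl lS ijS; apply/setP => z; rewrite !inE.
have [->|zl] := eqVneq z l; first by rewrite lS.
by case zS: (z \in S); rewrite //= (between_splitE ijl (ijS z zS) zl) orbN.
Qed.

Lemma sum_between_split i j l S1 S2 : between i j l ->
  {in S1, forall x, between i l x} -> {in S2, forall y, between l j y} ->
  \sum_(z in l |: (S1 :|: S2)) w z = w l + \sum_(x in S1) w x + \sum_(y in S2) w y.
Proof.
move=> ijl ilS1 ljS2; rewrite big_setU1 /= -?addrA; last first.
  rewrite inE; apply/norP; split; apply/negP.
    by move/ilS1/between_neq_r; rewrite eqxx.
  by move/ljS2/between_neq_l; rewrite eqxx.
have S12 : [disjoint S1 & S2].
  rewrite disjoint_subset; apply/subsetP => z /ilS1 ilz; rewrite inE.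
  by apply/negP => /ljS2 ljz; move: (between_disjoint ijl ilz); rewrite ljz.
by rewrite -bigU //; congr (_ + _); apply: eq_bigl => z; rewrite !inE.
Qed.

Lemma feasible_le_split i j k S : (0 < i)%N -> (0 < j)%N -> far p i j ->
  feasible p i j k S -> S != set0 ->
  exists2 l, l \in Pk p i j k & \sum_(z in S) w z <= f p w i l j + f p w l j i + w l.
Proof.
move=> i0 j0 fij FS /set0Pn[x0 x0S]; have ij := far_neq fij.
have [l lS keymax] := @arg_maxP _ _ _ x0 (mem S) (key i j) x0S.
have {}lS : l \in S := lS.
have lPk : l \in Pk p i j k by apply: (subsetP (feasible_subset_Pk FS)).
have /PkP[ijl _ _ _] := lPk; have ijS := feasible_between FS.
have out z : z \in S -> z != l -> icp i l j z < 0.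
  by move=> zS zl; apply: key_le_incircle_lt0 (ijS z zS) zl (keymax z zS).
have indS : independent p (i |: (j |: S)) by case/feasibleP: FS.
set S1 := [set z in S | between i l z]; set S2 := [set z in S | between l j z].
have F1 : feasible p i l j S1.
  apply/feasibleP; split=> [z | ]; rewrite ?inE.
    case/andP=> zS ilz; split=> //.
    exact/(outside_left_incircle _ i0 j0 ij ijl)/out/(between_neq_r ilz).
  apply: independent_subset indS; apply/subsetP => z; rewrite !inE.
  by case/or3P=> [-> | /eqP-> | /andP[-> _]]; rewrite /= ?lS ?orbT.
have F2 : feasible p l j i S2.
  apply/feasibleP; split=> [z | ]; rewrite ?inE.
    case/andP=> zS ljz; split=> //.
    exact/(outside_right_incircle _ i0 j0 ij ijl)/out/(between_neq_l ljz).
  apply: independent_subset indS; apply/subsetP => z; rewrite !inE.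
  by case/or3P=> [/eqP-> | -> | /andP[-> _]]; rewrite /= ?lS ?orbT.
exists l => //; rewrite (between_partition ijl lS ijS) (sum_between_split ijl).
- by have := le_f F1; have := le_f F2; lra.
- by move=> z; rewrite inE => /andP[].
- by move=> z; rewrite inE => /andP[].
Qed.

Lemma f_le_bigmax_split i j k : (0 < i)%N -> (0 < j)%N -> far p i j ->
  f p w i j k <= \big[Num.max/0]_(l in Pk p i j k) (f p w i l j + f p w l j i + w l).
Proof.
move=> i0 j0 fij; apply: f_le => [|S FS]; first exact: bigmax_ge_id.
have [->|S0] := eqVneq S set0; first by rewrite big_set0 bigmax_ge_id.
by have [l lPk le] := feasible_le_split i0 j0 fij FS S0; apply: bigmax_sup lPk le.
Qed.

Lemma feasible_merge i j k l S1 S2 : canonical_triple p i j k -> l \in Pk p i j k ->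
  feasible p i l j S1 -> feasible p l j i S2 -> feasible p i j k (l |: (S1 :|: S2)).
Proof.
move=> can lPk F1 F2; have /PkP[ijl lD li lj] := lPk.
have [i0 j0 fij _] := canonical_tripleP can; have ij := far_neq fij.
have S1P x : x \in S1 -> [/\ between i l x, icp i l j x < 0, far p x i & far p x l].
  move/(subsetP (feasible_subset_Pk F1))/PkP => [ilx xout xi xl]; split=> //.
  exact/(outside_left_incircle _ i0 j0 ij ijl).
have S2P y : y \in S2 -> [/\ between l j y, icp i l j y < 0, far p y l & far p y j].
  move/(subsetP (feasible_subset_Pk F2))/PkP => [ljy yout yl yj]; split=> //.
  exact/(outside_right_incircle _ i0 j0 ij ijl).
apply/feasibleP; split.
  move=> z; rewrite !inE => /or3P[/eqP-> // | /S1P[ilz zout _ _] | /S2P[ljz zout _ _]].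
  - have ijz := between_trans_l ijl ilz.
    by split=> //; apply: outside_D_of_outside_inner can ijl lD ijz zout.
  - have ijz := between_trans_r ijl ljz.
    by split=> //; apply: outside_D_of_outside_inner can ijl lD ijz zout.
have -> : i |: (j |: (l |: (S1 :|: S2))) = (i |: (l |: S1)) :|: (l |: (j |: S2)).
  apply/setP => z; rewrite !inE.
  by case: (z == i); case: (z == j); case: (z == l); case: (z \in S1).
have /feasibleP[_ ind1] := F1; have /feasibleP[_ ind2] := F2.
apply: independentU ind1 ind2 _ => a b.
rewrite !inE => /or3P[/eqP-> | /eqP-> | /S1P[ila aout ai al]].
- case/or3P=> [/eqP-> | /eqP-> | /S2P[ljb bout bl bj]] _ //; rewrite farC //.
  exact: far_of_right_part i0 j0 ij ijl ljb bout bj bl.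
- by case/or3P=> [/eqP-> | /eqP-> | /S2P[_ _ bl _]]; rewrite ?eqxx // farC.
- case/or3P=> [/eqP-> | /eqP-> | /S2P[ljb bout _ _]] _ //.
    exact: far_of_left_part i0 j0 ij ijl ila aout ai al.
  exact: far_across_parts i0 j0 ij ijl ila ljb aout bout ai al.
Qed.

Lemma split_le_f i j k l : canonical_triple p i j k -> l \in Pk p i j k ->
  f p w i l j + f p w l j i + w l <= f p w i j k.
Proof.
move=> can lPk; have /PkP[ijl _ li lj] := lPk.
have [S1 F1 ->] := f_attained j (etrans (farC i l) li).
have [S2 F2 ->] := f_attained i lj.
have := le_f (feasible_merge can lPk F1 F2).
rewrite (sum_between_split ijl (feasible_between F1) (feasible_between F2)); lra.
Qed.

Lemma f_eq0 i j k : far p i j -> Pk p i j k = set0 -> f p w i j k = 0.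
Proof.
move=> fij Pk0; apply/eqP; rewrite eq_le f_ge0 // andbT.
apply: f_le => // S /feasible_subset_Pk; rewrite Pk0 subset0 => /eqP->.
by rewrite big_set0.
Qed.

End ConvexPosition.

Theorem lemma20 (R : rcfType) (n : nat) (p : 'I_n.+1 -> pt R) (w : 'I_n.+1 -> R)
  (hconv : convex_ccw p) (hcirc : no_four_cocircular p)
  (hw : forall l : 'I_n.+1, (0 < l)%N -> 0 < w l)
  (i j k : 'I_n.+1) (hcan : canonical_triple p i j k) :
  f p w i j k =
    if Pk p i j k != set0 then
      \big[Num.max/0]_(l in Pk p i j k) (f p w i l j + f p w l j i + w l)
    else 0.
Proof.
have [i0 j0 fij _] := canonical_tripleP hcan.
case: ifPn => [_ | /negPn/eqP Pk0]; last by apply: f_eq0.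
apply/eqP; rewrite eq_le f_le_bigmax_split //=.
by apply: bigmax_le => [|l lPk]; [apply: f_ge0 | apply: split_le_f].
Qed.
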